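(* For all real $x$ and every real $\kappa \geq 1$, \[ Q(x) \geq \left(\frac{e^{(\pi(\kappa-1)+2)^{-1}}}{2\kappa}\sqrt{\frac{1}{\pi}(\kappa-1)(\pi(\kappa-1)+2)}\,\right) e^{-\frac{\kappa x^2}{2}}. \]
   Context: $Q$ denotes the Gaussian $Q$-function, $Q(x) = \frac{1}{\sqrt{2\pi}}\int_x^\infty e^{-t^2/2}\,dt$ for $x\in\mathbb{R}$. *)

From Stdlib Require Import Reals.
Open Scope R_scope.

Definition gauss_density (t : R) : R := exp (- t ^ 2 / 2) / sqrt (2 * PI).

Definition is_Q (x q : R) : Prop :=
  forall eps : R, 0 < eps ->
    exists M : R, forall b : R, M <= b ->
      forall pr : Riemann_integrable gauss_density x b,
        Rabs (RiemannInt pr - q) < eps.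

(* Plan.
   1. The value Q(x) is realised as [Qfun x = 1/2 - Phi0 x] with
      [Phi0 x = RInt gauss_density 0 x]; that [Phi0] tends to 1/2 rests on the
      Gaussian integral  int_0^oo exp (- t^2) dt = sqrt PI / 2, imported from
      MathComp-Analysis (module [GaussIntegral]) and transferred to Stdlib reals.
   2. Comparison principles: derivative inequalities on [x, y] compare
      increments, and on [x, +oo[ (with a limit 0) compare a function with Q.
   3. Boyd's bound  Q(y) >= PI phi(y) / ((PI - 1) y + sqrt (y^2 + 2 PI))  for
      y >= 0, by the comparison principles: the sign of its derivative minus
      Q' changes at most once.
   4. For k > 1, the bound touches Boyd's bound at the contact point
      a = sqrt (2 / ((k - 1) (PI (k - 1) + 2))), where moreover its slope equals
      Q'.  Comparing derivatives reduces to comparing values of the unimodal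
      hump t exp (- (k - 1) t^2 / 2) with its value at a, and a case analysis on
      x concludes.  The case k = 1 is Q >= 0. *)
From Stdlib Require Import Reals Lra.
From Coquelicot Require Import Coquelicot.
From mathcomp Require all_boot all_order all_algebra all_classical all_reals all_analysis.
From mathcomp Require Rstruct Rstruct_topology.
From Stdlib Require Import ssreflect.
Open Scope R_scope.

Definition vanishes_at_0plus (h : R -> R) : Prop :=
  forall eps, 0 < eps -> exists d, 0 < d /\ forall t, 0 < t < d -> Rabs (h t) < eps.

Module GaussIntegral.
Import all_boot all_order all_algebra all_classical all_reals all_analysis.
Import Rstruct Rstruct_topology Order.TTheory GRing.Theory Num.Theory.
Import numFieldNormedType.Exports.
Local Open Scope classical_set_scope.
Local Open Scope ring_scope.

(* MathComp-Analysis' cosine is Stdlib's: both are limits of the same power series. *)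
Lemma cos_Rcos (x : R) : cos x = Rtrigo_def.cos x.
Proof.
rewrite /Rtrigo_def.cos; case: exist_cos => l; rewrite /cos_in /infinite_sum => Hl.
have series_l : series (cos_coeff' x) @ \oo --> l.
  rewrite -cvg_shiftS /=; apply/(@cvgrPdist_lt _ R^o) => /= e /RltP /Hl[N HN].
  near=> n.
  have nN : (n >= N)%coq_nat by apply/ssrnat.leP; near: n; exact: nbhs_infty_ge.
  move: HN => /(_ _ nN) /[!RdistE] /RltP /=.
  rewrite distrC sum_f_R0E; congr (`| _ - _ | < e).
  apply: eq_bigr=> k _; rewrite /cos_coeff' /cos_n RdivE !RpowE INRE factE /Rsqr.
  change ((2 * k)%coq_nat) with (2 * k)%N; rewrite -[in RHS]mul2n exprM expr2 mulrAC //.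
rewrite -(cvg_lim (@Rhausdorff R) (@cvg_cos_coeff' R x)) -(cvg_lim (@Rhausdorff R) series_l) //.
Unshelve. all: by end_near. Qed.

(* MathComp-Analysis' pi is Stdlib's PI: both halves are the unique zero of cos in [0, 2]. *)
Lemma pi_PI : pi = PI.
Proof.
have [pi_range cos_pi] := @pihalf_02_cos_pihalf R.
have two : (2%:R : R) = IZR 2 by rewrite IZRposE INRE.
have PI_range := PI_RGT_0; have PI_4 := PI_4.
suff : pi / 2 = PI / 2 by move=> /(congr1 ( *%R^~ 2)); rewrite !divfK.
apply: cos_02_uniq => //; rewrite two -RdivE.
- by apply/andP; split; apply/RleP; rewrite -?R0E; lra.
- by rewrite cos_Rcos; exact: cos_PI2.
Qed.

Definition R_realType : realType := R.

Lemma derivable_pt_lim_derive1 (f : R_realType -> R_realType) (x : R_realType) :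
  derivable f x 1 -> derivable_pt_lim f x (derive1 f x).
Proof.
move=> df; rewrite derive1E => e /RltP e0.
have /cvgrPdist_lt /(_ e e0) /nbhs_ballP [d /= d0 Hd] :
  (fun h : R_realType => h^-1 *: ((f \o shift x) (h *: 1) - f x)) @ 0^' --> 'D_1 f x by [].
exists (mkposreal d (RltP d0)) => h h0 /= hd.
have hball : ball (0 : R_realType) d h by rewrite /ball /= sub0r normrN -RabsE; apply/RltP.
have /(_ (introN eqP h0)) := Hd h hball.
rewrite /= distrC RabsE => /RltP.
by rewrite /GRing.scale /= mulr1 (addrC h x) mulrC.
Qed.

(* [gauss_primitive x] is the Lebesgue integral of exp (- t ^ 2) over [0, x]. *)
Definition gauss_primitive : R_realType -> R_realType := gauss_integral_proof.integral0_gauss.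

Lemma gauss_primitive_derivable_pt_lim (x : R_realType) :
  (0 < x)%coqR -> derivable_pt_lim gauss_primitive x (exp (- x ^ 2))%coqR.
Proof.
move=> /RltP x0.
rewrite (_ : exp _ = gauss_fun x); last by rewrite /gauss_fun RexpE RpowE.
have [der <-] : derivable gauss_primitive x 1 /\ derive1 gauss_primitive x = gauss_fun x.
  apply: (@continuous_FTC1 _ gauss_fun (BLeft 0) _ (x + 1)) => //.
  - by rewrite ltrDl.
  - apply: continuous_compact_integrable; first exact: segment_compact.
    by apply: continuous_subspaceT; exact: continuous_gauss_fun.
  - by move=> ?; exact: continuous_gauss_fun.
exact: derivable_pt_lim_derive1 der.
Qed.

Lemma gauss_primitive_vanishes_0plus : vanishes_at_0plus gauss_primitive.
Proof.
move=> e /RltP e0.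
have primitive_cont : {within `[0, 1], continuous gauss_primitive}.
  apply: parameterized_integral_continuous => //.
  apply: continuous_compact_integrable => //; first exact: segment_compact.
  by apply: continuous_subspaceT; exact: continuous_gauss_fun.
have [_ /cvgrPdist_lt /(_ e e0) /nbhs_ballP [d /= d0 Hd] _] :=
  (continuous_within_itvP _ ltr01).1 primitive_cont.
have primitive0 : gauss_primitive 0 = 0.
  by rewrite /gauss_primitive /gauss_integral_proof.integral0_gauss set_itv1 Rintegral_set1.
exists d; split; first exact/RltP.
move=> t [/RltP t0 /RltP td].
have tball : ball (0 : R_realType) d t by rewrite /ball /= sub0r normrN ger0_norm // ltW.
by have := Hd t tball t0; rewrite primitive0 sub0r normrN RabsE => /RltP.
Qed.

Lemma gauss_primitive_limit (eps : R) : (0 < eps)%coqR ->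
  exists M : R, forall x : R,
    (M < x)%coqR -> (Rabs (gauss_primitive x - sqrt PI / 2) < eps)%coqR.
Proof.
have cvg_primitive : gauss_primitive x @[x --> +oo] --> Num.sqrt pi / 2.
  have : Num.sqrt (gauss_primitive x ^+ 2) @[x --> +oo] --> Num.sqrt (pi / 4).
    apply: continuous_cvg; first exact: sqrt_continuous.
    exact: gauss_integral_proof.cvg_integral0_gauss_sqr.
  rewrite sqrtrM ?pi_ge0 // sqrtrV // (_ : 4 = 2 ^+ 2); last by rewrite expr2 -natrM.
  rewrite sqrtr_sqr ger0_norm //; apply: cvg_trans; apply: near_eq_cvg; near=> x.
  by rewrite sqrtr_sqr ger0_norm //; exact: gauss_integral_proof.integral0_gauss_ge0.
move=> /RltP e0; move/cvgrPdist_lt: cvg_primitive => /(_ eps e0) [M [_ HM]].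
exists M => x /RltP Mx; apply/RltP.
have two : (2%:R : R) = IZR 2 by rewrite IZRposE INRE.
by move: (HM x Mx); rewrite RabsE distrC RsqrtE pi_PI two RdivE.
Unshelve. all: by end_near. Qed.
End GaussIntegral.

Lemma nondecreasing_of_derive (f df : R -> R) (x y : R) : x <= y ->
  (forall t, x <= t <= y -> is_derive f t (df t)) ->
  (forall t, x <= t <= y -> 0 <= df t) -> f x <= f y.
Proof.
move=> [xy|<-] f_df df_ge0; last exact: Rle_refl.
have [c [fxy cxy]] := MVT_cor2 f df x y xy (fun t ht => proj1 (is_derive_Reals _ _ _) (f_df t ht)).
have := df_ge0 c ltac:(lra); nra.
Qed.

Lemma increment_le (f g df dg : R -> R) (x y : R) : x <= y ->
  (forall t, x <= t <= y -> is_derive f t (df t)) ->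
  (forall t, x <= t <= y -> is_derive g t (dg t)) ->
  (forall t, x <= t <= y -> df t <= dg t) -> f y - f x <= g y - g x.
Proof.
move=> xy f_df g_dg df_le.
suff : g x - f x <= g y - f y by lra.
apply: (nondecreasing_of_derive (fun t => g t - f t) (fun t => dg t - df t)) => // t ht.
- exact: is_derive_minus (g_dg t ht) (f_df t ht).
- by have := df_le t ht; lra.
Qed.

Lemma eq_of_same_derive_pos (f g df : R -> R) :
  (forall t, 0 < t -> derivable_pt_lim f t (df t)) ->
  (forall t, 0 < t -> derivable_pt_lim g t (df t)) ->
  vanishes_at_0plus (fun t => f t - g t) -> forall x, 0 < x -> f x = g x.
Proof.
move=> f_df g_df small x x0.
have const a : 0 < a < x -> f x - g x = f a - g a.
  move=> [a0 ax].
  have deriv0 c : a <= c <= x -> derivable_pt_lim (fun t => f t - g t) c 0.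
    move=> hc; rewrite -(Rminus_diag_eq (df c) (df c)) //.
    by apply: derivable_pt_lim_minus; [apply: f_df|apply: g_df]; lra.
  by have [c [Hc _]] := MVT_cor2 _ (fun _ => 0) a x ax deriv0; lra.
apply: Rminus_diag_uniq; apply: Rabs_eq_0; apply: Rle_antisym; last exact: Rabs_pos.
apply: Rnot_lt_le => gap.
have [d [d0 Hd]] := small _ gap.
set a := Rmin (x / 2) (d / 2).
have a0 : 0 < a by apply: Rmin_pos; lra.
have [ax ad] : a < x /\ a < d.
  by have := Rmin_l (x / 2) (d / 2); have := Rmin_r (x / 2) (d / 2); rewrite -/a; lra.
have := Hd a (conj a0 ad); rewrite -const; lra.
Qed.

Lemma vanishes_at_0plus_minus (f g : R -> R) :
  vanishes_at_0plus f -> vanishes_at_0plus g -> vanishes_at_0plus (fun t => f t - g t).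
Proof.
move=> vf vg eps e0.
have [d1 [d10 H1]] := vf (eps / 2) ltac:(lra).
have [d2 [d20 H2]] := vg (eps / 2) ltac:(lra).
exists (Rmin d1 d2); split; first exact: Rmin_pos.
move=> t [t0 td].
have td1 : t < d1 by have := Rmin_l d1 d2; lra.
have td2 : t < d2 by have := Rmin_r d1 d2; lra.
have := Rabs_triang (f t) (- g t); rewrite Rabs_Ropp /Rminus.
have := H1 t (conj t0 td1); have := H2 t (conj t0 td2); lra.
Qed.

Lemma vanishes_at_0plus_continuous (f : R -> R) :
  continuous f 0 -> f 0 = 0 -> vanishes_at_0plus f.
Proof.
move=> /filterlim_locally f_cont f0 eps e0.
have [d Hd] := f_cont (mkposreal eps e0).
exists d; split; first exact: cond_pos.
move=> t [t0 td].
have /Hd : ball 0 d t.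
  by rewrite /ball /= /AbsRing_ball /abs /minus /plus /opp /= Ropp_0 Rplus_0_r Rabs_pos_eq; lra.
by rewrite f0 /ball /= /AbsRing_ball /abs /minus /plus /opp /= Ropp_0 Rplus_0_r.
Qed.

Lemma vanishes_at_0plus_rescale (h : R -> R) (a b : R) :
  0 < a -> vanishes_at_0plus h -> vanishes_at_0plus (fun t => h (t * a) * b).
Proof.
move=> a0 vh eps e0.
have b1 : 0 < Rabs b + 1 by have := Rabs_pos b; lra.
have [d [d0 Hd]] := vh (eps / (Rabs b + 1)) ltac:(exact: Rdiv_lt_0_compat).
exists (d / a); split; first exact: Rdiv_lt_0_compat.
move=> t [t0 td]; rewrite Rabs_mult.
have ta : 0 < t * a < d.
  split; first nra.
  by apply: (Rmult_lt_reg_r (/ a)); [exact: Rinv_0_lt_compat|field_simplify; lra].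
have := Hd _ ta; have := Rabs_pos (h (t * a)); have := Rabs_pos b.
have : eps / (Rabs b + 1) * (Rabs b + 1) = eps by field; lra.
nra.
Qed.

Lemma is_lim_gauss_decay (k : R) : 0 < k ->
  is_lim (fun t => exp (- (k * t ^ 2) / 2)) p_infty 0.
Proof.
move=> k0.
apply: (is_lim_comp exp (fun t => - (k * t ^ 2) / 2) p_infty 0 m_infty).
- exact: is_lim_exp_m.
- apply: (is_lim_ext (fun t => (- k / 2) * (t * t))); first by move=> t; field.
  have -> : m_infty = Rbar_mult (- k / 2) (Rbar_mult p_infty p_infty).
    by rewrite /=; case: Rle_dec => [?|//]; exfalso; lra.
  by apply: is_lim_scal_l; apply: is_lim_mult; [apply: is_lim_id..|].
- by exists 0.
Qed.

Lemma gauss_density_pos (t : R) : 0 < gauss_density t.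
Proof.
apply: Rdiv_lt_0_compat; first exact: exp_pos.
by apply: sqrt_lt_R0; have := PI_RGT_0; lra.
Qed.

Lemma gauss_density_continuous (t : R) : continuous gauss_density t.
Proof. by apply: ex_derive_continuous; rewrite /gauss_density; auto_derive. Qed.

Lemma ex_RInt_gauss_density (a b : R) : ex_RInt gauss_density a b.
Proof. by apply: ex_RInt_continuous => t _; exact: gauss_density_continuous. Qed.

Definition Phi0 (x : R) : R := RInt gauss_density 0 x.

Lemma Phi0_derive (x : R) : is_derive Phi0 x (gauss_density x).
Proof.
apply: is_derive_RInt; last exact: gauss_density_continuous.
by apply: filter_forall => b; apply: RInt_correct; exact: ex_RInt_gauss_density.
Qed.

Lemma rescaled_primitive_derive (t : R) : 0 < t ->
  derivable_pt_lim (fun u => GaussIntegral.gauss_primitive (u / sqrt 2) / sqrt PI) t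
    (gauss_density t).
Proof.
move=> t0; apply/is_derive_Reals.
have s2 : 0 < sqrt 2 by apply: sqrt_lt_R0; lra.
have sPI : 0 < sqrt PI by apply: sqrt_lt_R0; exact: PI_RGT_0.
have s2PI : sqrt (2 * PI) = sqrt 2 * sqrt PI by apply: sqrt_mult; have := PI_RGT_0; lra.
have outer : is_derive GaussIntegral.gauss_primitive (t / sqrt 2) (exp (- (t / sqrt 2) ^ 2)).
  apply/is_derive_Reals; apply: GaussIntegral.gauss_primitive_derivable_pt_lim.
  exact: Rdiv_lt_0_compat.
have inner : is_derive (fun u => u / sqrt 2) t (/ sqrt 2) by auto_derive; [|field]; lra.
have := is_derive_scal_l _ _ _ (/ sqrt PI)
  (is_derive_comp _ (fun u => u / sqrt 2) _ _ _ outer inner).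
rewrite /scal /= /mult /=.
have -> : gauss_density t = / sqrt 2 * exp (- (t / sqrt 2) ^ 2) * / sqrt PI.
  have sq2 : - (t / sqrt 2) ^ 2 = - t ^ 2 / 2.
    by rewrite Rpow_mult_distr pow_inv pow2_sqrt; [field|lra].
  by rewrite /gauss_density sq2 s2PI; field; lra.
exact: is_derive_ext.
Qed.

(* On ]0, +oo[, Phi0 is this rescaled primitive: both have derivative phi and
   vanish at 0+. *)
Lemma Phi0_gauss_primitive (x : R) : 0 < x ->
  Phi0 x = GaussIntegral.gauss_primitive (x / sqrt 2) / sqrt PI.
Proof.
move=> x0.
apply: (eq_of_same_derive_pos _ _ gauss_density _ rescaled_primitive_derive _ x x0).
- by move=> t _; apply/is_derive_Reals; exact: Phi0_derive.
apply: vanishes_at_0plus_minus.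
- apply: vanishes_at_0plus_continuous; last exact: RInt_point.
  by apply: ex_derive_continuous; exists (gauss_density 0); exact: Phi0_derive.
apply: vanishes_at_0plus_rescale; last exact: GaussIntegral.gauss_primitive_vanishes_0plus.
by apply: Rinv_0_lt_compat; apply: sqrt_lt_R0; lra.
Qed.

Lemma gauss_primitive_is_lim : is_lim GaussIntegral.gauss_primitive p_infty (sqrt PI / 2).
Proof.
apply/is_lim_spec => eps.
have [M HM] := GaussIntegral.gauss_primitive_limit eps (cond_pos eps).
by exists M.
Qed.

Lemma is_lim_const_minus (f : R -> R) (c l : R) :
  is_lim f p_infty l -> is_lim (fun b => c - f b) p_infty (c - l).
Proof.
move=> f_lim.
by apply: (is_lim_minus _ _ _ c l); [exact: is_lim_const|exact: f_lim|].
Qed.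

Lemma Phi0_is_lim : is_lim Phi0 p_infty (1 / 2).
Proof.
have s2 : 0 < sqrt 2 by apply: sqrt_lt_R0; lra.
have sPI : 0 < sqrt PI by apply: sqrt_lt_R0; exact: PI_RGT_0.
apply: (is_lim_ext_loc (fun x => GaussIntegral.gauss_primitive (x / sqrt 2) / sqrt PI)).
  by exists 0 => x x0; rewrite Phi0_gauss_primitive.
have -> : Finite (1 / 2) = Rbar_mult (sqrt PI / 2) (/ sqrt PI) by rewrite /=; f_equal; field; lra.
apply: is_lim_scal_r.
apply: (is_lim_comp _ (fun x => x / sqrt 2) p_infty _ p_infty); last by exists 0.
- exact: gauss_primitive_is_lim.
- have := is_lim_scal_r _ (/ sqrt 2) p_infty p_infty (is_lim_id p_infty).
  rewrite (is_Rbar_mult_unique _ _ _ (is_Rbar_mult_p_infty_pos _ _)) //.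
  exact: Rinv_0_lt_compat.
Qed.

Definition Qfun (x : R) : R := 1 / 2 - Phi0 x.

Lemma Qfun_derive (x : R) : is_derive Qfun x (- gauss_density x).
Proof.
have := is_derive_minus _ _ x _ _ (is_derive_const (1 / 2) x) (Phi0_derive x).
by rewrite /minus /plus /opp /zero /= Rplus_0_l.
Qed.

Lemma Qfun_0 : Qfun 0 = 1 / 2.
Proof. by rewrite /Qfun /Phi0 RInt_point /zero /=; ring. Qed.

Lemma Qfun_is_lim : is_lim Qfun p_infty 0.
Proof. by rewrite -(Rminus_diag_eq (1 / 2) (1 / 2)) //; exact: is_lim_const_minus Phi0_is_lim. Qed.

Lemma is_Q_Qfun (x : R) : is_Q x (Qfun x).
Proof.
move=> eps e0.
have /is_lim_spec /(_ (mkposreal eps e0)) [M HM] := Phi0_is_lim.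
exists (Rmax M x + 1) => b Hb pr.
have [Mb xb] : M < b /\ x <= b by have := Rmax_l M x; have := Rmax_r M x; lra.
have chasles := RInt_Chasles gauss_density 0 x b
  (ex_RInt_gauss_density _ _) (ex_RInt_gauss_density _ _).
rewrite -RInt_Reals /Qfun (_ : RInt gauss_density x b = Phi0 b - Phi0 x).
  by rewrite (_ : Phi0 b - Phi0 x - (1 / 2 - Phi0 x) = Phi0 b - 1 / 2); [exact: HM|ring].
by move: chasles; rewrite /Phi0 /plus /=; lra.
Qed.

Lemma Qfun_tail_comparison (G dG : R -> R) (x : R) :
  (forall t, x <= t -> is_derive G t (dG t)) ->
  (forall t, x <= t -> - gauss_density t <= dG t) ->
  is_lim G p_infty 0 -> G x <= Qfun x.
Proof.
move=> G_dG dG_ge G_lim.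
suff : Rbar_le (G x - 0) (Qfun x - 0) by rewrite /= !Rminus_0_r.
apply: (is_lim_le_loc (fun b => G x - G b) (fun b => Qfun x - Qfun b) p_infty).
- exists x => b xb.
  suff : Qfun b - Qfun x <= G b - G x by lra.
  apply: (increment_le _ _ (fun t => - gauss_density t) dG); first lra.
  + by move=> t _; exact: Qfun_derive.
  + by move=> t [xt _]; exact: G_dG.
  + by move=> t [xt _]; exact: dG_ge.
- exact: is_lim_const_minus.
- exact: is_lim_const_minus Qfun_is_lim.
Qed.

Lemma Qfun_ge0 (x : R) : 0 <= Qfun x.
Proof.
apply: (Qfun_tail_comparison (fun _ => 0) (fun _ => 0)) => [t _|t _|].
- exact: is_derive_const.
- by have := gauss_density_pos t; lra.
- exact: is_lim_const.
Qed.

Lemma PI_gt3 : 3 < PI.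
Proof. by have := PI2_3_2; lra. Qed.

Definition boyd_root (y : R) : R := sqrt (y ^ 2 + 2 * PI).
Definition boyd_denom (y : R) : R := (PI - 1) * y + boyd_root y.
Definition boyd (y : R) : R := PI * gauss_density y / boyd_denom y.
Definition boyd_deriv (y : R) : R :=
  - PI * gauss_density y * (y / boyd_denom y + (PI - 1 + y / boyd_root y) / boyd_denom y ^ 2).

Lemma boyd_root_sq (y : R) : boyd_root y ^ 2 = y ^ 2 + 2 * PI.
Proof. by rewrite pow2_sqrt //; have := PI_RGT_0; nra. Qed.

Lemma boyd_root_ge1 (y : R) : 1 <= boyd_root y.
Proof.
rewrite -sqrt_1; apply: sqrt_le_1_alt.
by have := PI_gt3; have := pow2_ge_0 y; lra.
Qed.

Lemma boyd_root_gt (y : R) : y < boyd_root y.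
Proof. by have := boyd_root_sq y; have := boyd_root_ge1 y; have := PI_RGT_0; nra. Qed.

Lemma boyd_denom_ge1 (y : R) : 0 <= y -> 1 <= boyd_denom y.
Proof. by rewrite /boyd_denom => y0; have := boyd_root_ge1 y; have := PI_gt3; nra. Qed.

(* y / boyd_root y increases on [0, +oo[, in cross-multiplied form. *)
Lemma boyd_root_cross (s t : R) : 0 <= s <= t -> s * boyd_root t <= t * boyd_root s.
Proof.
move=> st.
have := boyd_root_sq s; have := boyd_root_sq t.
have := boyd_root_ge1 s; have := boyd_root_ge1 t; have := PI_RGT_0.
move=> PI0 rt rs sqt sqs.
apply: Rsqr_incr_0_var; last by nra.
have : s ^ 2 <= t ^ 2 by nra.
by rewrite !Rsqr_mult !Rsqr_pow2 sqt sqs; nra.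
Qed.

Lemma boyd_derive (y : R) : 0 <= y -> is_derive boyd y (boyd_deriv y).
Proof.
move=> y0.
have W1 := boyd_root_ge1 y; have D1 := boyd_denom_ge1 y y0.
have s2PI : 0 < sqrt (2 * PI) by apply: sqrt_lt_R0; have := PI_RGT_0; lra.
move: W1 D1; rewrite /boyd /boyd_deriv /boyd_denom /boyd_root /gauss_density => W1 D1.
auto_derive; rewrite (_ : y * (y * 1) = y ^ 2); try ring.
- by have := PI_RGT_0; have := pow2_ge_0 y; repeat split; lra.
- by rewrite /Rdiv; field; repeat split; lra.
Qed.

(* The polynomial identity behind the sign of boyd' + phi, valid whenever
   W = sqrt (y ^ 2 + 2 p). *)
Lemma boyd_numerator (p y W D : R) : W ^ 2 = y ^ 2 + 2 * p -> D = (p - 1) * y + W ->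
  (W * D ^ 2 - p * y * D * W - p * (p - 1) * W - p * y) * (W + y)
  = p * (W - y) * (y - (p - 3) * W).
Proof.
move=> W_sq ->.
transitivity (p * (W - y) * (y - (p - 3) * W)
  + ((W + y) * ((p - 2) * y + W) - (p - 2) * y ^ 2) * (W ^ 2 - (y ^ 2 + 2 * p))); first ring.
by rewrite W_sq; ring.
Qed.

Lemma boyd_gap (y : R) : 0 <= y ->
  (boyd_deriv y + gauss_density y) * ((boyd_root y + y) * boyd_root y * boyd_denom y ^ 2)
  = PI * gauss_density y * (boyd_root y - y) * (y - (PI - 3) * boyd_root y).
Proof.
move=> y0.
have W1 := boyd_root_ge1 y; have D1 := boyd_denom_ge1 y y0.
rewrite /boyd_deriv; set W := boyd_root y in W1 *; set D := boyd_denom y in D1 *.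
set g := gauss_density y.
transitivity (g * ((W * D ^ 2 - PI * y * D * W - PI * (PI - 1) * W - PI * y) * (W + y))).
  by field; split; lra.
by rewrite (boyd_numerator PI y W D (boyd_root_sq y)) //; ring.
Qed.

(* Since y / boyd_root y increases, the sign of y - c * boyd_root y changes at
   most once on [0, +oo[; by [boyd_gap] (with c = PI - 3) so does that of
   boyd' + phi. *)
Lemma boyd_threshold_up (c y t : R) : 0 <= y <= t ->
  c * boyd_root y <= y -> c * boyd_root t <= t.
Proof.
move=> yt y_far.
have cross := boyd_root_cross y t yt.
have Wy := boyd_root_ge1 y; have Wt := boyd_root_ge1 t.
have : c * boyd_root y * boyd_root t <= y * boyd_root t.
  by apply: Rmult_le_compat_r; lra.
by move=> h; apply: (Rmult_le_reg_r (boyd_root y)); lra.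
Qed.

Lemma boyd_threshold_down (c t y : R) : 0 <= t <= y ->
  y <= c * boyd_root y -> t <= c * boyd_root t.
Proof.
move=> ty y_near.
have cross := boyd_root_cross t y ty.
have Wy := boyd_root_ge1 y; have Wt := boyd_root_ge1 t.
have : y * boyd_root t <= c * boyd_root y * boyd_root t.
  by apply: Rmult_le_compat_r; lra.
by move=> h; apply: (Rmult_le_reg_r (boyd_root y)); lra.
Qed.

Lemma boyd_0 : boyd 0 = 1 / 2.
Proof.
have s2PI : 0 < sqrt (2 * PI) by apply: sqrt_lt_R0; have := PI_RGT_0; lra.
have sq := sqrt_sqrt (2 * PI) ltac:(have := PI_RGT_0; lra).
rewrite /boyd /boyd_denom /boyd_root /gauss_density.
replace (- 0 ^ 2 / 2) with 0 by field; replace (0 ^ 2 + 2 * PI) with (2 * PI) by ring.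
rewrite exp_0.
transitivity (PI / (sqrt (2 * PI) * sqrt (2 * PI))); first by field; lra.
by rewrite sq; field; have := PI_RGT_0; lra.
Qed.

Lemma gauss_density_is_lim : is_lim gauss_density p_infty 0.
Proof.
have := is_lim_scal_r _ (/ sqrt (2 * PI)) _ _ (is_lim_gauss_decay 1 Rlt_0_1).
rewrite /= Rmult_0_l; apply: is_lim_ext => t.
by rewrite /gauss_density Rmult_1_l.
Qed.

Lemma boyd_is_lim : is_lim boyd p_infty 0.
Proof.
apply: (is_lim_le_le_loc (fun _ => 0) (fun y => PI * gauss_density y)).
- exists 0 => y y0.
  have g0 := gauss_density_pos y; have D1 := boyd_denom_ge1 y (Rlt_le _ _ y0).
  have PIg : 0 <= PI * gauss_density y by apply: Rmult_le_pos; have := PI_RGT_0; lra.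
  rewrite /boyd /Rdiv; split.
    by apply: Rmult_le_pos; [|apply: Rlt_le; apply: Rinv_0_lt_compat]; lra.
  rewrite -{2}(Rmult_1_r (PI * gauss_density y)); apply: Rmult_le_compat_l => //.
  by rewrite -Rinv_1; apply: Rinv_le_contravar; lra.
- exact: is_lim_const.
- by have := is_lim_scal_l _ PI _ _ gauss_density_is_lim; rewrite /= Rmult_0_r.
Qed.

(* Boyd's bound: Q(y) >= PI phi(y) / ((PI - 1) y + sqrt (y ^ 2 + 2 PI)) for y >= 0.
   Beyond the threshold where boyd' + phi changes sign, compare tails; below it,
   compare increments from 0, where both sides equal 1/2. *)
Theorem boyd_lower_bound (y : R) : 0 <= y -> boyd y <= Qfun y.
Proof.
move=> y0.
have gap_sign t : 0 <= t ->
    0 < (boyd_root t + t) * boyd_root t * boyd_denom t ^ 2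
    /\ 0 < PI * gauss_density t * (boyd_root t - t).
  move=> t0; have := boyd_root_gt t; have := boyd_root_ge1 t; have := boyd_denom_ge1 t t0.
  have := gauss_density_pos t; have := PI_RGT_0 => PI0 g0 D1 W1 Wt.
  split; first by apply: Rmult_lt_0_compat; [|apply: pow_lt]; nra.
  by apply: Rmult_lt_0_compat; [apply: Rmult_lt_0_compat|]; lra.
case: (Rle_lt_dec ((PI - 3) * boyd_root y) y) => [y_far|y_near].
- apply: (Qfun_tail_comparison boyd boyd_deriv) => [t yt|t yt|]; last exact: boyd_is_lim.
    by apply: boyd_derive; lra.
  have t0 : 0 <= t by lra.
  have := boyd_threshold_up (PI - 3) y t (conj y0 yt) y_far.
  have := boyd_gap t t0; have [pos1 pos2] := gap_sign t t0.
  by nra.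
- suff : boyd y - boyd 0 <= Qfun y - Qfun 0 by rewrite boyd_0 Qfun_0; lra.
  apply: (increment_le boyd Qfun boyd_deriv (fun t => - gauss_density t)) => // t [t0 ty].
  + exact: boyd_derive.
  + exact: Qfun_derive.
  + have := boyd_threshold_down (PI - 3) t y (conj t0 ty) (Rlt_le _ _ y_near).
    have := boyd_gap t t0; have [pos1 pos2] := gap_sign t t0.
    by nra.
Qed.

Definition hump (s t : R) : R := t * exp (- (s * t ^ 2) / 2).

Lemma hump_derive (s t : R) :
  is_derive (hump s) t (exp (- (s * t ^ 2) / 2) * (1 - s * t ^ 2)).
Proof.
rewrite /hump; auto_derive => //; rewrite (_ : t * (t * 1) = t ^ 2); last ring.
by rewrite /Rdiv; field.
Qed.

Lemma hump_increasing (s a b : R) : 0 <= s -> 0 <= a <= b -> s * b ^ 2 <= 1 ->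
  hump s a <= hump s b.
Proof.
move=> s0 [a0 ab] sb.
apply: (nondecreasing_of_derive _ _ a b ab) => t [at_ tb]; first exact: hump_derive.
apply: Rmult_le_pos; first exact: Rlt_le (exp_pos _).
by have := pow_incr t b 2 (conj (Rle_trans _ _ _ a0 at_) tb); nra.
Qed.

Lemma hump_decreasing (s a b : R) : 0 <= a <= b -> 1 <= s * a ^ 2 ->
  hump s b <= hump s a.
Proof.
move=> [a0 ab] sa.
suff : - hump s a <= - hump s b by lra.
apply: (nondecreasing_of_derive (fun t => - hump s t)
          (fun t => - (exp (- (s * t ^ 2) / 2) * (1 - s * t ^ 2))) a b ab) => t [at_ tb].
- exact: is_derive_opp (hump_derive s t).
- have s0 : 0 <= s by have := pow2_ge_0 a; nra.
  have st : 1 <= s * t ^ 2 by have := pow_incr a t 2 (conj a0 at_); nra.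
  by have := exp_pos (- (s * t ^ 2) / 2); nra.
Qed.

Lemma hump_split (k t : R) :
  t * exp (- (k * t ^ 2) / 2) = hump (k - 1) t * exp (- t ^ 2 / 2).
Proof. by rewrite /hump Rmult_assoc -exp_plus; do 2 f_equal; field. Qed.

Definition lb_const (k : R) : R :=
  exp (/ (PI * (k - 1) + 2)) / (2 * k) * sqrt (/ PI * (k - 1) * (PI * (k - 1) + 2)).
Definition lb (k x : R) : R := lb_const k * exp (- (k * x ^ 2) / 2).
Definition lb_deriv (k t : R) : R :=
  - (lb_const k * k * hump (k - 1) t * exp (- t ^ 2 / 2)).

Lemma lb_derive (k t : R) : is_derive (lb k) t (lb_deriv k t).
Proof.
rewrite /lb /lb_deriv Rmult_assoc -hump_split.
auto_derive => //; rewrite (_ : t * (t * 1) = t ^ 2); last ring.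
by rewrite /Rdiv; field.
Qed.

Lemma lb_is_lim (k : R) : 0 < k -> is_lim (lb k) p_infty 0.
Proof.
move=> k0; have := is_lim_scal_l _ (lb_const k) _ _ (is_lim_gauss_decay k k0).
by rewrite /= Rmult_0_r.
Qed.

(* The contact point: there the bound meets Boyd's bound and the slopes of the
   bound and of Q agree. *)
Definition contact (k : R) : R := sqrt (2 / ((k - 1) * (PI * (k - 1) + 2))).

Section Contact.
Variable k : R.
Hypothesis k1 : 1 < k.

Let s0 : 0 < k - 1. Proof. lra. Qed.
Let A2 : 2 <= PI * (k - 1) + 2.
Proof. by have := PI_RGT_0; nra. Qed.

(* a > 0 and (k - 1) a ^ 2 = 2 / (PI (k - 1) + 2) <= 1: a lies before the peak of
   the hump. *)
Lemma contact_pos : 0 < contact k.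
Proof. by apply: sqrt_lt_R0; apply: Rdiv_lt_0_compat; nra. Qed.

Lemma contact_sq : contact k ^ 2 = 2 / ((k - 1) * (PI * (k - 1) + 2)).
Proof. by rewrite pow2_sqrt //; apply: Rlt_le; apply: Rdiv_lt_0_compat; nra. Qed.

Lemma contact_le : (k - 1) * contact k ^ 2 <= 1.
Proof.
rewrite contact_sq (_ : (k - 1) * _ = 2 / (PI * (k - 1) + 2)); last by field; lra.
by apply: (Rmult_le_reg_r (PI * (k - 1) + 2)); [lra|rewrite /Rdiv Rmult_assoc Rinv_l; lra].
Qed.

Lemma lb_const_pos : 0 < lb_const k.
Proof.
apply: Rmult_lt_0_compat; first by apply: Rdiv_lt_0_compat; [exact: exp_pos|lra].
by apply: sqrt_lt_R0; apply: Rmult_lt_0_compat; [apply: Rmult_lt_0_compat;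
  [apply: Rinv_0_lt_compat; exact: PI_RGT_0|]|]; lra.
Qed.

(* At the contact point the slope of the bound equals phi: c_k k hump(a) = 1 / sqrt (2 PI). *)
Lemma lb_const_contact : lb_const k * k * hump (k - 1) (contact k) = / sqrt (2 * PI).
Proof.
have PI0 := PI_RGT_0; have a0 := contact_pos; have a_sq := contact_sq.
rewrite /lb_const /hump.
set A := PI * (k - 1) + 2 in a_sq *; set a := contact k in a0 a_sq *.
set r := sqrt (/ PI * (k - 1) * A); set q := sqrt (2 * PI).
have A0 : 0 < A by rewrite /A; nra.
have r0 : 0 < r by apply: sqrt_lt_R0; apply: Rmult_lt_0_compat;
  [apply: Rmult_lt_0_compat; [exact: Rinv_0_lt_compat|]|]; lra.
have q0 : 0 < q by apply: sqrt_lt_R0; lra.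
have exp_cancel : exp (/ A) * exp (- ((k - 1) * a ^ 2) / 2) = 1.
  by rewrite -exp_plus -[RHS]exp_0 a_sq; f_equal; field; lra.
have raq : r * a * q = 2.
  have r_sq : r ^ 2 = / PI * (k - 1) * A.
    by rewrite pow2_sqrt //; apply: Rlt_le; apply: Rmult_lt_0_compat;
      [apply: Rmult_lt_0_compat; [exact: Rinv_0_lt_compat|]|]; lra.
  have q_sq : q ^ 2 = 2 * PI by rewrite pow2_sqrt //; lra.
  have : (r * a * q) ^ 2 = 2 ^ 2.
    by rewrite !Rpow_mult_distr r_sq a_sq q_sq; field; lra.
  have : 0 < r * a * q by apply: Rmult_lt_0_compat; [apply: Rmult_lt_0_compat|]; lra.
  nra.
transitivity (exp (/ A) * exp (- ((k - 1) * a ^ 2) / 2) * (r * a * q) / (2 * q)).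
  by field; lra.
by rewrite exp_cancel raq; field; lra.
Qed.

(* At a, sqrt (a ^ 2 + 2 PI) simplifies, so that Boyd's bound equals the bound. *)
Lemma boyd_root_contact : boyd_root (contact k) = (PI * (k - 1) + 1) * contact k.
Proof.
have a0 := contact_pos; have PI0 := PI_RGT_0.
apply: sqrt_lem_1; [have := pow2_ge_0 (contact k); lra|apply: Rmult_le_pos; nra|].
transitivity (PI * (k - 1) * (PI * (k - 1) + 2) * contact k ^ 2 + contact k ^ 2); first ring.
by rewrite contact_sq; field; nra.
Qed.

Lemma lb_contact : lb k (contact k) = boyd (contact k).
Proof.
have a0 := contact_pos; have PI0 := PI_RGT_0.
have slope : lb k (contact k) * (k * contact k) = gauss_density (contact k).
  transitivity (lb_const k * k * (contact k * exp (- (k * contact k ^ 2) / 2))).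
    by rewrite /lb; ring.
  by rewrite hump_split /gauss_density /Rdiv -lb_const_contact; ring.
rewrite /boyd /boyd_denom boyd_root_contact -slope.
field; apply: Rgt_not_eq.
have : 0 < PI * k * contact k by apply: Rmult_lt_0_compat; [apply: Rmult_lt_0_compat|]; lra.
nra.
Qed.

Lemma lb_deriv_gap (t : R) :
  lb_deriv k t + gauss_density t
  = lb_const k * k * (hump (k - 1) (contact k) - hump (k - 1) t) * exp (- t ^ 2 / 2).
Proof. by rewrite /lb_deriv /gauss_density /Rdiv -lb_const_contact; ring. Qed.

Lemma lb_deriv_ge (t : R) : hump (k - 1) t <= hump (k - 1) (contact k) ->
  - gauss_density t <= lb_deriv k t.
Proof.
move=> ht; have gap := lb_deriv_gap t; have c0 := lb_const_pos.
have : 0 <= lb_const k * k * (hump (k - 1) (contact k) - hump (k - 1) t) * exp (- t ^ 2 / 2).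
  by apply: Rmult_le_pos; [apply: Rmult_le_pos; [apply: Rmult_le_pos|]|
    apply: Rlt_le; exact: exp_pos]; lra.
lra.
Qed.

Lemma lb_deriv_le (t : R) : hump (k - 1) (contact k) <= hump (k - 1) t ->
  lb_deriv k t <= - gauss_density t.
Proof.
move=> ht; have gap := lb_deriv_gap t; have c0 := lb_const_pos.
have : 0 <= lb_const k * k * (hump (k - 1) t - hump (k - 1) (contact k)) * exp (- t ^ 2 / 2).
  by apply: Rmult_le_pos; [apply: Rmult_le_pos; [apply: Rmult_le_pos|]|
    apply: Rlt_le; exact: exp_pos]; lra.
lra.
Qed.

End Contact.

(* The bound lies below Q for every kappa > 1.  With a the contact point, where
   the bound lies below Q by Boyd's bound, three cases arise: x <= a (the hump is
   below hump(a) on [x, a]: compare increments), x > a with hump(x) >= hump(a)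
   (the hump is above hump(a) on [a, x]: compare increments), and hump(x) <
   hump(a), where x is past the peak of the hump (compare tails). *)
Theorem lb_le_Qfun (k x : R) : 1 < k -> lb k x <= Qfun x.
Proof.
move=> k1.
have a0 := contact_pos k k1; have sa := contact_le k k1.
have at_contact : lb k (contact k) <= Qfun (contact k).
  by rewrite lb_contact //; apply: boyd_lower_bound; lra.
set s := k - 1 in sa *; set a := contact k in a0 sa at_contact *.
have s0 : 0 < s by rewrite /s; lra.
case: (Rle_lt_dec x a) => [xa|ax].
  suff : Qfun a - Qfun x <= lb k a - lb k x by lra.
  apply: (increment_le _ _ (fun t => - gauss_density t) (lb_deriv k)) => // t [xt ta].
  - exact: Qfun_derive.
  - exact: lb_derive.
  apply: lb_deriv_ge => //; rewrite -/s -/a; case: (Rle_lt_dec t 0) => [t_le0|t_pos].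
    have ha : 0 < hump s a by apply: Rmult_lt_0_compat; [|exact: exp_pos].
    suff : hump s t <= 0 by lra.
    by have := exp_pos (- (s * t ^ 2) / 2); rewrite /hump; nra.
  by apply: hump_increasing; lra.
case: (Rle_lt_dec (hump s a) (hump s x)) => [hx|hx].
  suff : lb k x - lb k a <= Qfun x - Qfun a by lra.
  apply: (increment_le _ _ (lb_deriv k) (fun t => - gauss_density t)); first lra.
  - by move=> t _; exact: lb_derive.
  - by move=> t _; exact: Qfun_derive.
  move=> t [at_ tx]; apply: lb_deriv_le => //; rewrite -/s -/a.
  case: (Rle_lt_dec (s * t ^ 2) 1) => [st|st]; first by apply: hump_increasing; lra.
  by have := hump_decreasing s t x (conj (ltac:(lra) : 0 <= t) tx) (Rlt_le _ _ st); lra.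
have sx : 1 < s * x ^ 2.
  apply: Rnot_le_lt => sx.
  by have := hump_increasing s a x (Rlt_le _ _ s0) (conj (Rlt_le _ _ a0) (Rlt_le _ _ ax)) sx; lra.
apply: (Qfun_tail_comparison _ (lb_deriv k)) => [t _|t xt|]; first exact: lb_derive.
  apply: lb_deriv_ge => //; rewrite -/s -/a.
  by have := hump_decreasing s x t (conj (ltac:(lra) : 0 <= x) xt) (Rlt_le _ _ sx); lra.
by apply: lb_is_lim; lra.
Qed.

(* For kappa > 1 this is [lb_le_Qfun]; for kappa = 1 the bound is 0. *)
Theorem theorem1 (x kappa : R) (hk : 1 <= kappa) :
  exists q : R, is_Q x q /\
    q >= (exp (/ (PI * (kappa - 1) + 2)) / (2 * kappa)
          * sqrt (/ PI * (kappa - 1) * (PI * (kappa - 1) + 2)))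
         * exp (- (kappa * x ^ 2) / 2).
Proof.
exists (Qfun x); split; first exact: is_Q_Qfun.
apply: Rle_ge; case: hk => [k1|<-].
- exact: lb_le_Qfun.
- rewrite (_ : / PI * (1 - 1) * _ = 0); last ring.
  by rewrite sqrt_0 Rmult_0_r Rmult_0_l; exact: Qfun_ge0.
Qed.
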